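(* The number of $n$-dimensional Matoušek-type USOs is $2^{\Theta(n^2)}$.
   Context: All vectors and matrices are over $GF(2)$; $\oplus$ denotes xor. An orientation of the $n$-dimensional hypercube $\{0,1\}^n$ is given by an outmap $o:\{0,1\}^n\to\{0,1\}^n$, the edge $\{v,v\oplus e_i\}$ being directed away from $v$ iff $o(v)_i=1$. An $n$-dimensional Matoušek-type USO is an orientation of the form $o(v)=M(v\oplus s)$ for all $v$, where $M=PAP^T$ for some permutation matrix $P$ and some invertible upper-triangular matrix $A\in\{0,1\}^{n\times n}$, and $s\in\{0,1\}^n$. Two Matoušek-type USOs are counted as different iff their outmap functions differ. *)

From HB Require Import structures.
From mathcomp Require Import all_boot all_order all_algebra all_fingroup.
From mathcomp Require Import all_classical all_reals all_analysis.
Set Implicit Arguments. Unset Strict Implicit. Unset Printing Implicit Defensive.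
Import GRing.Theory Num.Theory.
Local Open Scope ring_scope.

(* Vectors of {0,1}^n are column vectors over GF(2) = 'F_2; xor is +. *)
Notation vec n := 'cV['F_2]_n.
Notation outmap n := {ffun vec n -> vec n}.

Definition upper_trig n (A : 'M['F_2]_n) : bool :=
  [forall i : 'I_n, forall j : 'I_n, (j < i)%N ==> (A i j == 0)].

Definition matousek_outmap n (p : 'S_n) (A : 'M['F_2]_n) (s : vec n) : outmap n :=
  [ffun v => (perm_mx p *m A *m (perm_mx p)^T) *m (v + s)].

Definition is_matousek n (o : outmap n) : bool :=
  [exists p : 'S_n, exists A : 'M['F_2]_n, exists s : vec n,
     [&& upper_trig A, A \in unitmx & o == matousek_outmap p A s]].

Definition num_matousek (n : nat) : nat := #|[set o : outmap n | is_matousek o]|.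

From HB Require Import structures.
From mathcomp Require Import all_boot all_order all_algebra all_fingroup.
From mathcomp Require Import all_classical all_reals all_analysis.
From mathcomp Require Import zify.
Set Implicit Arguments. Unset Strict Implicit. Unset Printing Implicit Defensive.
Import Order.TTheory GRing.Theory Num.Theory.
Local Open Scope ring_scope.

(* Lower bound: for every upper unitriangular A, the linear outmap v |-> A v is
   of Matousek type (P = 1, s = 0), and these outmaps are pairwise distinct
   because o(e_j) is the j-th column of A; the C(n,2) entries above the
   diagonal are free, giving 2^{C(n,2)} outmaps.  Upper bound: every such
   outmap is the image of a triple (P, A, s), and there are at most
   n! 2^{n^2} 2^n <= 2^{3 n^2} triples. *)

Lemma card_ltn_pairs n : #|[set x : 'I_n * 'I_n | (x.1 < x.2)%N]| = 'C(n, 2).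
Proof.
rewrite -sum1dep_card.
rewrite -(pair_big_dep xpredT (fun i j : 'I_n => (i < j)%N) (fun _ _ => 1%N)) /=.
rewrite (exchange_big_dep xpredT) //= -bin2_sum big_mkord.
apply: eq_bigr => j _.
by rewrite (big_ord_narrow (ltnW (ltn_ord j))) sum1_card card_ord.
Qed.

Lemma sqr_leq_4bin2 n : (2 <= n)%N -> (n ^ 2 <= 4 * 'C(n, 2))%N.
Proof. by move=> n_ge2; have := mul_bin_diag n 1; rewrite bin1; nia. Qed.

Lemma fact_leq_exp2_sqr n : (n`! <= 2 ^ (n * n))%N.
Proof.
elim: n => [//|n IHn]; rewrite factS.
have le_n1_2n1 : (n.+1 <= 2 ^ n.+1)%N by apply/ltnW/ltn_expl.
apply: (leq_trans (leq_mul le_n1_2n1 IHn)).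
by rewrite -expnD leq_pexp2l //; lia.
Qed.

Section Unitriangular.
Variables (R : nzRingType) (n : nat).

Definition unitrig_mx (B : {ffun 'I_n * 'I_n -> R}) : 'M[R]_n :=
  \matrix_(i, j) if i == j then 1 else if (i < j)%N then B (i, j) else 0.

Lemma unitrig_mx_lower0 B (i j : 'I_n) : (j < i)%N -> unitrig_mx B i j = 0.
Proof.
move=> lt_ji; rewrite mxE ltnNge (ltnW lt_ji).
by rewrite -val_eqE /= gtn_eqF.
Qed.

Lemma unitrig_mx_inj :
  {in pffun_on 0 [set x : 'I_n * 'I_n | (x.1 < x.2)%N] predT &,
    injective unitrig_mx}.
Proof.
move=> B1 B2 /pffun_onP[supp1 _] /pffun_onP[supp2 _] eqB; apply/ffunP => -[i j].
have [lt_ij | le_ji] := ltnP i j.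
  have /matrixP/(_ i j) := eqB.
  by rewrite !mxE lt_ij -val_eqE /= ltn_eqF.
have out0 B : 0.-support B \subset [set x : 'I_n * 'I_n | (x.1 < x.2)%N] ->
    B (i, j) = 0.
  move=> /fintype.subsetP/(_ (i, j)); rewrite !inE /= ltnNge le_ji.
  by move/contraNF=> /(_ isT)/negbFE/eqP.
by rewrite !out0.
Qed.

End Unitriangular.

Lemma unitrig_mx_unit (R : comUnitRingType) n (B : {ffun 'I_n * 'I_n -> R}) :
  unitrig_mx B \in unitmx.
Proof.
rewrite unitmxE -det_tr det_trig.
  by rewrite big1 ?unitr1 // => i _; rewrite !mxE eqxx.
by apply/is_trig_mxP => i j lt_ij; rewrite mxE unitrig_mx_lower0.
Qed.

Lemma unitrig_mx_upper n (B : {ffun 'I_n * 'I_n -> 'F_2}) :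
  upper_trig (unitrig_mx B).
Proof.
by apply/forallP => i; apply/forallP => j; apply/implyP => /unitrig_mx_lower0->.
Qed.

Definition mulmx_outmap n (A : 'M['F_2]_n) : outmap n := [ffun v => A *m v].

Lemma mulmx_outmap_inj n : injective (@mulmx_outmap n).
Proof.
move=> A1 A2 eqA; apply/matrixP => i j.
have /ffunP/(_ (delta_mx j 0))/matrixP/(_ i 0) := eqA.
by rewrite !ffunE -!colE !mxE.
Qed.

Lemma is_matousek_mulmx n (A : 'M['F_2]_n) :
  upper_trig A -> A \in unitmx -> is_matousek (mulmx_outmap A).
Proof.
move=> A_upper A_unit; apply/existsP; exists 1%g; apply/existsP; exists A.
apply/existsP; exists 0; rewrite A_upper A_unit; apply/eqP/ffunP => v.
by rewrite !ffunE perm_mx1 trmx1 mul1mx mulmx1 addr0.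
Qed.

Lemma exp2_bin2_leq_num_matousek n : (2 ^ 'C(n, 2) <= num_matousek n)%N.
Proof.
set D := [set x : 'I_n * 'I_n | (x.1 < x.2)%N].
pose o B := mulmx_outmap (@unitrig_mx _ n B).
have o_inj : {in pffun_on 0 D predT &, injective o}.
  by move=> B1 B2 B1D B2D /mulmx_outmap_inj/unitrig_mx_inj; apply.
rewrite -card_ltn_pairs -(card_Fp (isT : prime 2)) -(card_pffun_on 0 D predT).
rewrite -(card_in_imset o_inj).
apply/subset_leq_card/fintype.subsetP => _ /imsetP[B _ ->].
by rewrite inE is_matousek_mulmx ?unitrig_mx_upper ?unitrig_mx_unit.
Qed.

Lemma num_matousek_leq_card_params n :
  (num_matousek n <= #|{: 'S_n * 'M['F_2]_n * vec n}|)%N.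
Proof.
pose o (x : 'S_n * 'M['F_2]_n * vec n) := matousek_outmap x.1.1 x.1.2 x.2.
apply: leq_trans (leq_imset_card o _); apply/subset_leq_card/fintype.subsetP => f.
rewrite inE => /existsP[p /existsP[A /existsP[s /and3P[_ _ /eqP->]]]].
by apply/imsetP; exists (p, A, s).
Qed.

Lemma num_matousek_leq_exp2 n : (num_matousek n <= 2 ^ (3 * n ^ 2))%N.
Proof.
apply: (leq_trans (num_matousek_leq_card_params n)).
rewrite !card_prod card_Sn !card_mx card_Fp //.
have le_2n_2nn : (2 ^ (n * 1) <= 2 ^ (n * n))%N.
  by rewrite leq_pexp2l // muln1; case: n => // n; rewrite leq_pmulr.
rewrite (_ : 3 * n ^ 2 = n * n + n * n + n * n)%N; last by lia.
by rewrite !expnD !leq_mul ?fact_leq_exp2_sqr.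
Qed.

Theorem lemma9 (R : realType) :
  exists (c1 c2 : R) (N : nat), 0 < c1 /\ 0 < c2 /\
    forall n : nat, (N <= n)%N ->
      (2 : R) `^ (c1 * (n ^ 2)%:R) <= (num_matousek n)%:R /\
      (num_matousek n)%:R <= (2 : R) `^ (c2 * (n ^ 2)%:R).
Proof.
exists 4^-1, 3, 2%N; split; first by rewrite invr_gt0.
split=> // n n_ge2; split.
- apply: (@le_trans _ _ (2 `^ 'C(n, 2)%:R)).
    apply: ler_powR; first by rewrite ler1n.
    rewrite ler_pdivrMl ?ltr0n // -natrM ler_nat.
    exact: sqr_leq_4bin2.
  by rewrite powR_mulrn // -natrX ler_nat exp2_bin2_leq_num_matousek.
- rewrite -natrM powR_mulrn // -natrX ler_nat.
  exact: num_matousek_leq_exp2.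
Qed.
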